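(* Let $n\ge 1$ be an integer, $a_0,\dots,a_n$ real constants, $p\in\{1,2,3,4\}$, and let $A^{j+k}_p,B^{j+k}_p$ ($|k|\le p$), $\mathcal{A}(\Lambda)$, $\mathcal{B}(\Lambda)$ and $C_{p+2}$ be as defined in the context (computed with the optimally blended quadrature rule). Fix a frequency $\omega>0$ and, for a mesh size $h>0$, let $\tilde\lambda^h$ be the approximate eigenvalue associated with the Bloch wave $U^j=e^{ij\omega h}$ in the mixed isogeometric discretization of $\mathcal{L}=\sum_{m=0}^n a_m(-\Delta)^m$, i.e. the number satisfying $$\Big(\sum_{m=1}^n a_m\,\omega^{2m-2}\Big)\mathcal{A}(\omega h)=(\tilde\lambda^h-a_0)\,\mathcal{B}(\omega h)\,h^2 .$$ Then, as $h\to 0$, $$\tilde\lambda^h-\sum_{k=0}^n a_k\,\omega^{2k}=\Big(C_{p+2}\sum_{k=1}^n a_k\,\omega^{2k}\Big)(\omega h)^{2p+2}+\mathcal{O}(h^{2p+4}).$$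
   Context: Setting: the $2n$-order eigenvalue problem $\mathcal{L}u=\lambda u$ with $\mathcal{L}=\sum_{m=0}^n a_m(-\Delta)^m$ is written in mixed form with auxiliary fields $\psi^0=u$, $\psi^m=-\Delta\psi^{m-1}$ ($m=1,\dots,n-1$), and discretized with $C^{p-1}$ B-splines of degree $p$ on a uniform 1D mesh of size $h$; with the Bloch ansatz $\Psi^{m,j}=\omega^{2m}e^{ij\omega h}$ for the coefficients of $\psi^m_h$ and elimination of the auxiliary fields, one obtains the defining relation for $\tilde\lambda^h$ given in the claim. B-splines: on knots $x_j=jh$, $\theta^j_0=1$ on $[x_j,x_{j+1})$ and $0$ otherwise, $\theta^j_p(x)=\frac{x-x_j}{x_{j+p}-x_j}\theta^j_{p-1}(x)+\frac{x_{j+p+1}-x}{x_{j+p+1}-x_{j+1}}\theta^{j+1}_{p-1}(x)$. Discrete forms: $a_h(w,v)=\sum_K\sum_l\varpi_{l,K}w'(n_{l,K})v'(n_{l,K})$, $b_h(w,v)=\sum_K\sum_l\varpi_{l,K}w(n_{l,K})v(n_{l,K})$, using elementwise the optimally blended rule $\tau_pG_{p+1}+(1-\tau_p)L_{p+1}$ ($G_l$: $l$-point Gauss–Legendre, $L_l$: $l$-point Gauss–Lobatto), with $\tau_1=\tfrac12,\tau_2=\tfrac13,\tau_3=-\tfrac32,\tau_4=-\tfrac{79}{5}$. For an interior index $j$: $A^{j+k}_p=h\,a_h(\theta^{j+k}_p,\theta^j_p)$, $B^{j+k}_p=\frac1h b_h(\theta^{j+k}_p,\theta^j_p)$ ($|k|\le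 p$), independent of $h$ and $j$; $\mathcal{A}(\Lambda)=A^j_p+2\sum_{k=1}^pA^{j+k}_p\cos(k\Lambda)$, $\mathcal{B}(\Lambda)=B^j_p+2\sum_{k=1}^pB^{j+k}_p\cos(k\Lambda)$; $C_{p+2}=2(-1)^p\sum_{k=1}^p\big(\frac{k^{2p+4}}{(2p+4)!}A^{j+k}_p+\frac{k^{2p+2}}{(2p+2)!}B^{j+k}_p\big)$. The quantity $\sum_{k=0}^n a_k\omega^{2k}$ is the exact eigenvalue of $\mathcal{L}$ for frequency $\omega$ (e.g. $\omega=j\pi$ on $[0,1]$). *)

From Stdlib Require Import Reals ZArith List.
Import ListNotations.
Open Scope R_scope.

Fixpoint sumR (f : nat -> R) (N : nat) : R :=
  match N with O => 0 | S N' => sumR f N' + f N' end.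

(* bpiece p j m x : the polynomial piece of theta^j_p on the closed element
   K_m = [m, m+1], evaluated at x (Cox-de Boor recursion, unit knot spacing,
   so x_{j+p} - x_j = p). *)
Fixpoint bpiece (p : nat) (j m : Z) (x : R) : R :=
  match p with
  | O => if Z.eqb j m then 1 else 0
  | S q => (x - IZR j) / INR (S q) * bpiece q j m x
         + (IZR (j + Z.of_nat (S q) + 1) - x) / INR (S q) * bpiece q (j + 1) m x
  end.

Fixpoint dbpiece (p : nat) (j m : Z) (x : R) : R :=
  match p with
  | O => 0
  | S q => / INR (S q) * bpiece q j m x
         + (x - IZR j) / INR (S q) * dbpiece q j m x
         - / INR (S q) * bpiece q (j + 1) m x
         + (IZR (j + Z.of_nat (S q) + 1) - x) / INR (S q) * dbpiece q (j + 1) m x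
  end.

(* lists of (node, weight) *)
Definition gauss (l : nat) : list (R * R) :=
  match l with
  | 1%nat => [(0, 2)]
  | 2%nat => [(- / sqrt 3, 1); (/ sqrt 3, 1)]
  | 3%nat => [(- sqrt (3/5), 5/9); (0, 8/9); (sqrt (3/5), 5/9)]
  | 4%nat =>
      let a := sqrt (3/7 - 2/7 * sqrt (6/5)) in
      let b := sqrt (3/7 + 2/7 * sqrt (6/5)) in
      let wa := (18 + sqrt 30) / 36 in
      let wb := (18 - sqrt 30) / 36 in
      [(- b, wb); (- a, wa); (a, wa); (b, wb)]
  | 5%nat =>
      let a := / 3 * sqrt (5 - 2 * sqrt (10/7)) in
      let b := / 3 * sqrt (5 + 2 * sqrt (10/7)) in
      let wa := (322 + 13 * sqrt 70) / 900 in
      let wb := (322 - 13 * sqrt 70) / 900 in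
      [(- b, wb); (- a, wa); (0, 128/225); (a, wa); (b, wb)]
  | _ => []
  end.

Definition lobatto (l : nat) : list (R * R) :=
  match l with
  | 2%nat => [(-1, 1); (1, 1)]
  | 3%nat => [(-1, 1/3); (0, 4/3); (1, 1/3)]
  | 4%nat => [(-1, 1/6); (- / sqrt 5, 5/6); (/ sqrt 5, 5/6); (1, 1/6)]
  | 5%nat => [(-1, 1/10); (- sqrt (3/7), 49/90); (0, 32/45);
              (sqrt (3/7), 49/90); (1, 1/10)]
  | _ => []
  end.

Definition apply_rule (r : list (R * R)) (m : Z) (f : R -> R) : R :=
  fold_right (fun nw acc => snd nw / 2 * f (IZR m + (1 + fst nw) / 2) + acc) 0 r.

Definition tau (p : nat) : R :=
  match p with
  | 1%nat => 1/2
  | 2%nat => 1/3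
  | 3%nat => - (3/2)
  | 4%nat => - (79/5)
  | _ => 0
  end.

Definition blended (p : nat) (m : Z) (f : R -> R) : R :=
  tau p * apply_rule (gauss (S p)) m f
  + (1 - tau p) * apply_rule (lobatto (S p)) m f.

(* sum over the elements K_m, m = -p .. 2p; these contain the supports of
   theta^0_p and theta^k_p for all |k| <= p, all other elements contribute 0 *)
Definition sum_elems (p : nat) (g : Z -> R) : R :=
  sumR (fun i => g (Z.of_nat i - Z.of_nat p)%Z) (3 * p + 1).

(* A^{j+k}_p and B^{j+k}_p computed with j = 0 and h = 1
   (they are independent of h and of the interior index j) *)
Definition Acoef (p : nat) (k : Z) : R :=
  sum_elems p (fun m => blended p m (fun x => dbpiece p k m x * dbpiece p 0 m x)).

Definition Bcoef (p : nat) (k : Z) : R :=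
  sum_elems p (fun m => blended p m (fun x => bpiece p k m x * bpiece p 0 m x)).

Definition calA (p : nat) (L : R) : R :=
  Acoef p 0 + 2 * sumR (fun i => Acoef p (Z.of_nat (S i)) * cos (INR (S i) * L)) p.

Definition calB (p : nat) (L : R) : R :=
  Bcoef p 0 + 2 * sumR (fun i => Bcoef p (Z.of_nat (S i)) * cos (INR (S i) * L)) p.

Definition Cconst (p : nat) : R :=
  2 * (-1) ^ p *
  sumR (fun i => INR (S i) ^ (2 * p + 4) / INR (fact (2 * p + 4)) * Acoef p (Z.of_nat (S i))
               + INR (S i) ^ (2 * p + 2) / INR (fact (2 * p + 2)) * Bcoef p (Z.of_nat (S i))) p.

(* Expanding cos (k L) in Taylor series turns calA and calB into even power
   series in L = omega h, with coefficients built from the moments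
   sum_k k^(2m) A_k and sum_k k^(2m) B_k.  The defining relation reads
   (lam - a_0) h^2 calB = S calA with S = sum_m a_m omega^(2m-2), so the claim
   follows from calA(L) - L^2 calB(L) - C_{p+2} L^(2p+4) calB(L) = O(L^(2p+6))
   and calB(L) = 1 + O(L^2), that is, from finitely many identities between
   these moments; C_{p+2} is exactly the first coefficient where they fail.
   The A_k and B_k are rational: the B-spline pieces are polynomials with
   rational coefficients, and the blended rule applied to a polynomial of
   degree at most 2p only sees its moments up to order 2p, which are
   rational.  The identities are therefore checked in exact arithmetic. *)

From Stdlib Require Import Reals ZArith List QArith Qreals Lra Lia.
Import ListNotations.
Open Scope R_scope.

Lemma sumR_ext f g N : (forall i, (i < N)%nat -> f i = g i) -> sumR f N = sumR g N.
Proof.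
  induction N as [|N IH]; intro H; simpl; [reflexivity|].
  rewrite IH, H; [reflexivity|lia|intros; apply H; lia].
Qed.

Lemma sumR_0 N : sumR (fun _ => 0) N = 0.
Proof. induction N; simpl; [ring|]. rewrite IHN; ring. Qed.

Lemma sumR_plus f g N : sumR (fun i => f i + g i) N = sumR f N + sumR g N.
Proof. induction N; simpl; [ring|]. rewrite IHN; ring. Qed.

Lemma sumR_minus f g N : sumR (fun i => f i - g i) N = sumR f N - sumR g N.
Proof. induction N; simpl; [ring|]. rewrite IHN; ring. Qed.

Lemma sumR_scal c f N : sumR (fun i => c * f i) N = c * sumR f N.
Proof. induction N; simpl; [ring|]. rewrite IHN; ring. Qed.

Lemma sumR_swap (f : nat -> nat -> R) M N :
  sumR (fun i => sumR (fun m => f i m) M) N = sumR (fun m => sumR (fun i => f i m) N) M.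
Proof.
  induction N; simpl.
  - symmetry. apply sumR_0.
  - rewrite IHN, <- sumR_plus. reflexivity.
Qed.

Lemma sumR_shift f N : sumR f (S N) = f O + sumR (fun i => f (S i)) N.
Proof. induction N; simpl in *; [ring|]. rewrite IHN; ring. Qed.

Lemma sumR_le f g N : (forall i, (i < N)%nat -> f i <= g i) -> sumR f N <= sumR g N.
Proof.
  induction N; intro H; simpl; [lra|].
  apply Rplus_le_compat; [apply IHN; intros|]; apply H; lia.
Qed.

Lemma sumR_nonneg f N : (forall i, (i < N)%nat -> 0 <= f i) -> 0 <= sumR f N.
Proof. intro H. rewrite <- (sumR_0 N). now apply sumR_le. Qed.

Lemma Rabs_sumR_le f N : Rabs (sumR f N) <= sumR (fun i => Rabs (f i)) N.
Proof.
  induction N; simpl.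
  - rewrite Rabs_R0; lra.
  - eapply Rle_trans; [apply Rabs_triang|]. lra.
Qed.

Lemma sum_f_R0_sumR f n : sum_f_R0 f n = sumR f (S n).
Proof. induction n; simpl in *; [ring|]. rewrite IHn; ring. Qed.

Lemma cos_term_0 y : cos_term y 0 = 1.
Proof. unfold cos_term; simpl; field. Qed.

(* On [-PI/2, PI/2] the Taylor series of cos is alternating with decreasing terms. *)
Lemma cos_between_partial_sums y N : - PI / 2 <= y <= PI / 2 ->
  (sum_f_R0 (cos_term y) N <= cos y <= sum_f_R0 (cos_term y) (S N)) \/
  (sum_f_R0 (cos_term y) (S N) <= cos y <= sum_f_R0 (cos_term y) N).
Proof.
  intros [Hy1 Hy2]. unfold cos_approx in *.
  destruct (Nat.Even_or_Odd N) as [[k ->]|[k ->]].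
  - right. split.
    + replace (S (2 * k)) with (2 * k + 1)%nat by lia. apply (cos_bound y k); assumption.
    + destruct k as [|k].
      * simpl. rewrite cos_term_0. apply COS_bound.
      * replace (2 * S k)%nat with (2 * (k + 1))%nat by lia. apply (cos_bound y k); assumption.
  - left. replace (S (2 * k + 1)) with (2 * (k + 1))%nat by lia. apply (cos_bound y k); assumption.
Qed.

Lemma Rabs_sub_le_of_between x u v : (u <= x <= v) \/ (v <= x <= u) -> Rabs (x - u) <= Rabs (v - u).
Proof. intros [[]|[]]; unfold Rabs; repeat destruct Rcase_abs; lra. Qed.

Lemma Rabs_cos_term y k : Rabs (cos_term y k) <= y ^ (2 * k).
Proof.
  assert (Hf : 1 <= INR (fact (2 * k))) by (apply (le_INR 1), lt_O_fact).
  assert (Hy : 0 <= y ^ (2 * k)) by (rewrite pow_mult; apply pow_le, pow2_ge_0).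
  unfold cos_term. rewrite Rabs_mult, pow_1_abs, Rmult_1_l, Rabs_right.
  - unfold Rdiv. rewrite <- (Rmult_1_r (y ^ (2 * k))) at 2.
    apply Rmult_le_compat_l; [lra|]. rewrite <- Rinv_1. apply Rinv_le_contravar; lra.
  - apply Rle_ge, Rmult_le_pos; [lra|]. left; apply Rinv_0_lt_compat; lra.
Qed.

Lemma cos_taylor_error y N : - PI / 2 <= y <= PI / 2 ->
  Rabs (cos y - sumR (cos_term y) (S N)) <= y ^ (2 * S N).
Proof.
  intro Hy. rewrite <- sum_f_R0_sumR.
  eapply Rle_trans; [apply Rabs_sub_le_of_between, cos_between_partial_sums, Hy|].
  rewrite tech5. replace (_ + _ - _) with (cos_term y (S N)) by ring.
  apply Rabs_cos_term.
Qed.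

(** * Taylor expansion of cosine polynomials *)

Definition cos_poly (c : nat -> R) (p : nat) (L : R) : R :=
  c O + 2 * sumR (fun i => c (S i) * cos (INR (S i) * L)) p.

Definition cos_poly_taylor_coef (c : nat -> R) (p m : nat) : R :=
  (if Nat.eqb m 0 then c O else 0)
  + (-1) ^ m / INR (fact (2 * m)) * (2 * sumR (fun i => c (S i) * INR (S i) ^ (2 * m)) p).

Definition cos_poly_taylor (c : nat -> R) (p N : nat) (L : R) : R :=
  sumR (fun m => cos_poly_taylor_coef c p m * L ^ (2 * m)) N.

Definition cos_poly_remainder_const (c : nat -> R) (p N : nat) : R :=
  2 * sumR (fun i => Rabs (c (S i)) * INR (S i) ^ (2 * N)) p.

Lemma cos_poly_remainder_const_nonneg c p N : 0 <= cos_poly_remainder_const c p N.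
Proof.
  apply Rmult_le_pos; [lra|]. apply sumR_nonneg. intros.
  apply Rmult_le_pos; [apply Rabs_pos | apply pow_le, pos_INR].
Qed.

Lemma cos_poly_taylor_expand c p N L :
  cos_poly_taylor c p (S N) L
  = c O + 2 * sumR (fun i => c (S i) * sumR (cos_term (INR (S i) * L)) (S N)) p.
Proof.
  unfold cos_poly_taylor, cos_poly_taylor_coef.
  rewrite (sumR_ext _ (fun m => (if Nat.eqb m 0 then c O else 0) * L ^ (2 * m)
      + 2 * sumR (fun i => c (S i) * cos_term (INR (S i) * L) m) p)).
  - rewrite sumR_plus, (sumR_shift (fun m => (if Nat.eqb m 0 then c O else 0) * L ^ (2 * m))).
    rewrite (sumR_ext (fun i => (if Nat.eqb (S i) 0 then c O else 0) * _) (fun _ => 0))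
      by (intros; simpl; ring).
    rewrite sumR_0, sumR_scal, sumR_swap. simpl (Nat.eqb 0 0).
    rewrite pow_O, Rmult_1_r, Rplus_0_r. do 2 f_equal.
    apply sumR_ext. intros i _. now rewrite sumR_scal.
  - intros m _.
    replace (sumR (fun i => c (S i) * cos_term (INR (S i) * L) m) p)
      with ((-1) ^ m / INR (fact (2 * m)) * L ^ (2 * m)
            * sumR (fun i => c (S i) * INR (S i) ^ (2 * m)) p); [ring|].
    rewrite <- sumR_scal. apply sumR_ext. intros i _.
    unfold cos_term. rewrite Rpow_mult_distr. field. apply INR_fact_neq_0.
Qed.

Lemma cos_poly_taylor_error c p N L : 0 <= L -> INR p * L <= 1 ->
  Rabs (cos_poly c p L - cos_poly_taylor c p (S N) L)
  <= cos_poly_remainder_const c p (S N) * L ^ (2 * S N).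
Proof.
  intros HL HpL. rewrite cos_poly_taylor_expand. unfold cos_poly, cos_poly_remainder_const.
  replace (_ - _) with (2 * sumR (fun i => c (S i) *
            (cos (INR (S i) * L) - sumR (cos_term (INR (S i) * L)) (S N))) p).
  2:{ rewrite (sumR_ext _ (fun i => c (S i) * cos (INR (S i) * L)
                                  - c (S i) * sumR (cos_term (INR (S i) * L)) (S N)))
        by (intros; ring).
      rewrite sumR_minus. ring. }
  rewrite Rabs_mult, Rabs_right, Rmult_assoc by lra. apply Rmult_le_compat_l; [lra|].
  rewrite Rmult_comm, <- sumR_scal.
  eapply Rle_trans; [apply Rabs_sumR_le|]. apply sumR_le. intros i Hi.
  assert (Hk : 0 <= INR (S i) * L <= 1).
  { split; [apply Rmult_le_pos; [apply pos_INR | lra]|].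
    eapply Rle_trans; [|exact HpL]. apply Rmult_le_compat_r; [lra|]. apply le_INR; lia. }
  pose proof PI2_1.
  replace (L ^ _ * _) with (Rabs (c (S i)) * (INR (S i) * L) ^ (2 * S N))
    by (rewrite Rpow_mult_distr; ring).
  rewrite Rabs_mult. apply Rmult_le_compat_l; [apply Rabs_pos|].
  apply cos_taylor_error. lra.
Qed.

Lemma Cconst_taylor_coef p :
  cos_poly_taylor_coef (fun k => Acoef p (Z.of_nat k)) p (p + 2)
  - cos_poly_taylor_coef (fun k => Bcoef p (Z.of_nat k)) p (p + 1) = Cconst p.
Proof.
  unfold cos_poly_taylor_coef, Cconst.
  replace (Nat.eqb (p + 2) 0) with false by (symmetry; apply Nat.eqb_neq; lia).
  replace (Nat.eqb (p + 1) 0) with false by (symmetry; apply Nat.eqb_neq; lia).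
  replace (2 * (p + 2))%nat with (2 * p + 4)%nat by lia.
  replace (2 * (p + 1))%nat with (2 * p + 2)%nat by lia.
  rewrite sumR_plus.
  rewrite (sumR_ext (fun i => INR (S i) ^ (2 * p + 4) / _ * _)
             (fun i => / INR (fact (2 * p + 4)) * (Acoef p (Z.of_nat (S i)) * INR (S i) ^ (2 * p + 4))))
    by (intros; unfold Rdiv; ring).
  rewrite (sumR_ext (fun i => INR (S i) ^ (2 * p + 2) / _ * _)
             (fun i => / INR (fact (2 * p + 2)) * (Bcoef p (Z.of_nat (S i)) * INR (S i) ^ (2 * p + 2))))
    by (intros; unfold Rdiv; ring).
  rewrite !sumR_scal, !pow_add. unfold Rdiv. simpl. ring.
Qed.

Definition coef_shift (b : nat -> R) (m : nat) : R :=
  match m with O => 0 | S m' => b m' end.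

Lemma even_series_sub_shift a b N L :
  sumR (fun m => a m * L ^ (2 * m)) N - L ^ 2 * sumR (fun m => b m * L ^ (2 * m)) N
  = sumR (fun m => (a m - coef_shift b m) * L ^ (2 * m)) N - coef_shift b N * L ^ (2 * N).
Proof.
  induction N as [|N IH]; cbn [sumR]; [simpl; ring|].
  replace (2 * S N)%nat with (2 + 2 * N)%nat by lia. rewrite pow_add.
  transitivity (sumR (fun m => a m * L ^ (2 * m)) N - L ^ 2 * sumR (fun m => b m * L ^ (2 * m)) N
                + a N * L ^ (2 * N) - L ^ 2 * b N * L ^ (2 * N)); [ring|].
  rewrite IH. simpl coef_shift. ring.
Qed.

Lemma INR_S_mul_le_1 p L : 0 <= L -> INR (S p) * L <= 1 -> INR p * L <= 1 /\ L <= 1.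
Proof. rewrite S_INR. pose proof (pos_INR p). split; nra. Qed.

Lemma Rabs_sub3_le a b c d : Rabs (a - b - c - d) <= Rabs a + Rabs b + Rabs c + Rabs d.
Proof.
  pose proof (Rabs_triang_inv2 a b); pose proof (Rabs_triang (a - b - c) (- d)).
  pose proof (Rabs_triang (a - b) (- c)); pose proof (Rabs_triang a (- b)).
  rewrite Rabs_Ropp in *. unfold Rminus in *. lra.
Qed.

Section SymbolExpansion.

Variables (alpha beta : nat -> R) (p : nat) (C : R).

Hypothesis coef_match : forall m, (m < p + 2)%nat ->
  cos_poly_taylor_coef alpha p m = coef_shift (cos_poly_taylor_coef beta p) m.
Hypothesis coef_lead :
  cos_poly_taylor_coef alpha p (p + 2) - cos_poly_taylor_coef beta p (p + 1) = C.
Hypothesis coef_norm : cos_poly_taylor_coef beta p 0 = 1.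

Lemma cos_poly_sub_1_bound L : 0 <= L -> INR p * L <= 1 ->
  Rabs (cos_poly beta p L - 1) <= cos_poly_remainder_const beta p 1 * L ^ 2.
Proof.
  intros HL HpL. pose proof (cos_poly_taylor_error beta p 0 L HL HpL) as E.
  unfold cos_poly_taylor in E. cbn [sumR] in E. rewrite coef_norm in E.
  replace (0 + 1 * L ^ (2 * 0)) with 1 in E by (simpl; ring). exact E.
Qed.

Lemma taylor_sub_shift L :
  cos_poly_taylor alpha p (S (p + 2)) L - L ^ 2 * cos_poly_taylor beta p (S (p + 2)) L
  = C * L ^ (2 * p + 4) - cos_poly_taylor_coef beta p (p + 2) * (L ^ (2 * p + 4) * L ^ 2).
Proof.
  unfold cos_poly_taylor. rewrite even_series_sub_shift. cbn [sumR].
  rewrite (sumR_ext _ (fun _ => 0)) by (intros m Hm; rewrite coef_match by lia; ring).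
  rewrite sumR_0, <- pow_add.
  replace (coef_shift _ (p + 2)) with (cos_poly_taylor_coef beta p (p + 1))
    by (now replace (p + 2)%nat with (S (p + 1)) by lia).
  rewrite <- coef_lead. simpl coef_shift.
  replace (2 * (p + 2))%nat with (2 * p + 4)%nat by lia.
  replace (2 * S (p + 2))%nat with (2 * p + 4 + 2)%nat by lia. ring.
Qed.

Lemma symbol_residual_bound : exists K, forall L, 0 <= L -> INR (S p) * L <= 1 ->
  Rabs (cos_poly alpha p L - L ^ 2 * cos_poly beta p L
        - C * L ^ (2 * p + 4) * cos_poly beta p L) <= K * L ^ (2 * p + 6).
Proof.
  exists (cos_poly_remainder_const alpha p (S (p + 2))
          + cos_poly_remainder_const beta p (S (p + 2))
          + Rabs (cos_poly_taylor_coef beta p (p + 2))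
          + Rabs C * cos_poly_remainder_const beta p 1).
  intros L HL HSpL.
  destruct (INR_S_mul_le_1 p L HL HSpL) as [HpL HL1].
  pose proof (cos_poly_remainder_const_nonneg beta p (S (p + 2))) as HKB.
  pose proof (cos_poly_remainder_const_nonneg beta p 1) as HK1.
  pose proof (cos_poly_taylor_error alpha p (p + 2) L HL HpL) as EA.
  pose proof (cos_poly_taylor_error beta p (p + 2) L HL HpL) as EB.
  pose proof (cos_poly_sub_1_bound L HL HpL) as E1.
  pose proof (taylor_sub_shift L) as T.
  set (KB := cos_poly_remainder_const beta p (S (p + 2))) in *.
  set (K1 := cos_poly_remainder_const beta p 1) in *.
  set (cb := cos_poly_taylor_coef beta p (p + 2)) in *.
  set (X := L ^ (2 * p + 4)) in *.
  assert (HX : 0 <= X) by (apply pow_le; lra).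
  assert (HL2 : 0 <= L ^ 2 <= 1) by (split; [apply pow_le | simpl]; nra).
  replace (L ^ (2 * S (p + 2))) with (X * L ^ 2) in EA, EB
    by (unfold X; rewrite <- pow_add; f_equal; lia).
  replace (L ^ (2 * p + 6)) with (X * L ^ 2) by (unfold X; rewrite <- pow_add; f_equal; lia).
  set (PA := cos_poly_taylor alpha p (S (p + 2)) L) in *.
  set (PB := cos_poly_taylor beta p (S (p + 2)) L) in *.
  set (A := cos_poly alpha p L) in *. set (B := cos_poly beta p L) in *.
  replace (A - L ^ 2 * B - C * X * B) with
    ((A - PA) - L ^ 2 * (B - PB) - cb * (X * L ^ 2) - C * X * (B - 1)) by lra.
  eapply Rle_trans; [apply Rabs_sub3_le|].
  rewrite !Rabs_mult, (Rabs_right (L ^ 2)), (Rabs_right X) by lra.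
  assert (Rabs (B - PB) * L ^ 2 <= KB * (X * L ^ 2)).
  { eapply Rle_trans; [apply Rmult_le_compat_r; [lra | exact EB]|].
    assert (0 <= KB * (X * L ^ 2)) by (apply Rmult_le_pos; nra). nra. }
  assert (Rabs C * X * Rabs (B - 1) <= Rabs C * K1 * (X * L ^ 2)).
  { replace (Rabs C * K1 * (X * L ^ 2)) with (Rabs C * X * (K1 * L ^ 2)) by ring.
    apply Rmult_le_compat_l; [apply Rmult_le_pos; [apply Rabs_pos | lra] | exact E1]. }
  nra.
Qed.

End SymbolExpansion.

(** * Error of the approximate eigenvalue *)

Lemma Rmult_le_1_of_le_inv c L : 0 < c -> L <= / c -> c * L <= 1.
Proof.
  intros Hc HL. apply (Rmult_le_reg_l (/ c)); [now apply Rinv_0_lt_compat|].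
  rewrite <- Rmult_assoc, Rinv_l, Rmult_1_l, Rmult_1_r by lra. exact HL.
Qed.

Lemma half_le_of_near_1 K L x : 0 <= K -> 0 <= L <= 1 -> (2 * K + 2) * L <= 1 ->
  Rabs (x - 1) <= K * L ^ 2 -> 1 / 2 <= x.
Proof.
  intros HK HL HKL Hx. pose proof (Rle_abs (1 - x)). rewrite Rabs_minus_sym in Hx.
  simpl in Hx. nra.
Qed.

Lemma eigenvalue_error_pointwise (S1 a0 lam omega h A B C K : R) (q : nat) :
  0 < h -> 1 / 2 <= B ->
  S1 * A = (lam - a0) * B * h ^ 2 ->
  Rabs (A - (omega * h) ^ 2 * B - C * (omega * h) ^ (2 * q + 4) * B)
    <= K * (omega * h) ^ (2 * q + 6) ->
  Rabs (lam - (a0 + omega ^ 2 * S1) - C * (omega ^ 2 * S1) * (omega * h) ^ (2 * q + 2))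
    <= 2 * Rabs S1 * K * omega ^ (2 * q + 6) * h ^ (2 * q + 4).
Proof.
  intros Hh HB Hrel Hres.
  set (E := lam - (a0 + omega ^ 2 * S1) - C * (omega ^ 2 * S1) * (omega * h) ^ (2 * q + 2)).
  set (Res := A - (omega * h) ^ 2 * B - C * (omega * h) ^ (2 * q + 4) * B) in *.
  assert (Hh2 : 0 < h ^ 2) by (apply pow_lt; lra).
  assert (Key : E * (B * h ^ 2) = S1 * Res).
  { transitivity ((lam - a0) * B * h ^ 2 - S1 * A + S1 * Res).
    - unfold E, Res.
      replace ((omega * h) ^ (2 * q + 4)) with ((omega * h) ^ (2 * q + 2) * (omega * h) ^ 2)
        by (rewrite <- pow_add; f_equal; lia).
      ring.
    - rewrite <- Hrel. ring. }
  assert (HE : Rabs E * B * h ^ 2 <= Rabs S1 * K * omega ^ (2 * q + 6) * h ^ (2 * q + 4) * h ^ 2).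
  { replace (Rabs E * B * h ^ 2) with (Rabs (E * (B * h ^ 2)))
      by (rewrite Rabs_mult, (Rabs_right (B * h ^ 2)) by nra; ring).
    rewrite Key, Rabs_mult.
    replace (Rabs S1 * K * omega ^ (2 * q + 6) * h ^ (2 * q + 4) * h ^ 2)
      with (Rabs S1 * (K * (omega * h) ^ (2 * q + 6)))
      by (rewrite Rpow_mult_distr, Rmult_assoc, <- pow_add;
          replace (2 * q + 4 + 2)%nat with (2 * q + 6)%nat by lia; ring).
    apply Rmult_le_compat_l; [apply Rabs_pos | exact Hres]. }
  assert (0 <= Rabs E * h ^ 2 * (2 * B - 1)) by (apply Rmult_le_pos; [apply Rmult_le_pos|]; [apply Rabs_pos | lra | lra]).
  apply (Rmult_le_reg_r (h ^ 2)); [exact Hh2|]. lra.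
Qed.

Lemma eigenvalue_error_bound (n : nat) (a : nat -> R) (p : nat) (omega : R)
    (CA CB : R -> R) (C K1 K2 : R) :
  0 < omega -> 0 <= K1 ->
  (forall L, 0 <= L -> INR (S p) * L <= 1 -> Rabs (CB L - 1) <= K1 * L ^ 2) ->
  (forall L, 0 <= L -> INR (S p) * L <= 1 ->
     Rabs (CA L - L ^ 2 * CB L - C * L ^ (2 * p + 4) * CB L) <= K2 * L ^ (2 * p + 6)) ->
  exists K delta : R, 0 < delta /\
    forall h lam : R, 0 < h < delta ->
      sumR (fun i => a (S i) * omega ^ (2 * i)) n * CA (omega * h)
        = (lam - a O) * CB (omega * h) * h ^ 2 ->
      Rabs (lam - sumR (fun k => a k * omega ^ (2 * k)) (S n)
              - C * sumR (fun i => a (S i) * omega ^ (2 * S i)) n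
                * (omega * h) ^ (2 * p + 2))
        <= K * h ^ (2 * p + 4).
Proof.
  intros Hom HK1 HB HR.
  set (S1 := sumR (fun i => a (S i) * omega ^ (2 * i)) n).
  assert (HS1 : sumR (fun i => a (S i) * omega ^ (2 * S i)) n = omega ^ 2 * S1).
  { unfold S1. rewrite <- sumR_scal. apply sumR_ext. intros i _.
    replace (2 * S i)%nat with (2 + 2 * i)%nat by lia. rewrite pow_add. ring. }
  assert (HS : sumR (fun k => a k * omega ^ (2 * k)) (S n) = a O + omega ^ 2 * S1).
  { rewrite sumR_shift, HS1. simpl. ring. }
  (* Below Lmax the symbol CB stays above 1/2 and the expansions are valid. *)
  set (Lmax := Rmin (/ INR (S p)) (/ (2 * K1 + 2))).
  assert (HSp : 0 < INR (S p)) by apply lt_0_INR, Nat.lt_0_succ.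
  assert (HLmax : 0 < Lmax) by (apply Rmin_glb_lt; apply Rinv_0_lt_compat; lra).
  assert (Hm1 : Lmax <= / INR (S p)) by apply Rmin_l.
  assert (Hm2 : Lmax <= / (2 * K1 + 2)) by apply Rmin_r.
  exists (2 * Rabs S1 * K2 * omega ^ (2 * p + 6)), (Lmax / omega).
  split; [apply Rdiv_lt_0_compat; lra|].
  intros h lam [Hh Hhd] Hrel. rewrite HS, HS1.
  set (L := omega * h) in *.
  assert (HL : 0 < L) by (unfold L; nra).
  assert (HLm : L <= Lmax).
  { unfold L. apply Rlt_le. apply (Rmult_lt_compat_l omega) in Hhd; [|lra].
    replace (omega * (Lmax / omega)) with Lmax in Hhd by (field; lra). lra. }
  assert (HpL : INR (S p) * L <= 1) by (apply Rmult_le_1_of_le_inv; lra).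
  assert (HCB : 1 / 2 <= CB L).
  { apply (half_le_of_near_1 K1 L); try lra.
    - rewrite S_INR in HpL; pose proof (pos_INR p); nra.
    - apply Rmult_le_1_of_le_inv; lra.
    - exact (HB L (Rlt_le _ _ HL) HpL). }
  apply (eigenvalue_error_pointwise S1 (a O) lam omega h (CA L) (CB L)); try assumption.
  exact (HR L (Rlt_le _ _ HL) HpL).
Qed.

(** * Exact rational evaluation of the coefficients *)

(* Polynomials with rational coefficients, constant term first.  The
   coefficients are kept reduced so that [vm_compute] stays fast. *)
Fixpoint qpoly_eval (P : list Q) (x : R) : R :=
  match P with [] => 0 | c :: P' => Q2R c + x * qpoly_eval P' x end.

Fixpoint qpoly_add (P P' : list Q) : list Q :=
  match P, P' with
  | [], _ => P'
  | _, [] => P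
  | c :: P1, c' :: P1' => Qred (c + c') :: qpoly_add P1 P1'
  end.

Definition qpoly_scale (c : Q) (P : list Q) : list Q := map (fun x => Qred (c * x)) P.

Fixpoint qpoly_mul_aux (P P' : list Q) : list Q :=
  match P with [] => [] | c :: P1 => qpoly_add (qpoly_scale c P') (0%Q :: qpoly_mul_aux P1 P') end.

(* The product with the empty list is the empty list, so that [length]
   remains a bound for the degree plus one. *)
Definition qpoly_mul (P P' : list Q) : list Q :=
  match P' with [] => [] | _ => qpoly_mul_aux P P' end.

Fixpoint qpoly_comp (P L : list Q) : list Q :=
  match P with [] => [] | c :: P1 => qpoly_add [c] (qpoly_mul L (qpoly_comp P1 L)) end.

Lemma Q2R_Qred x : Q2R (Qred x) = Q2R x.
Proof. apply Qeq_eqR, Qred_correct. Qed.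

Lemma qpoly_eval_add P P' x : qpoly_eval (qpoly_add P P') x = qpoly_eval P x + qpoly_eval P' x.
Proof.
  revert P'; induction P as [|c P IH]; intros [|c' P']; cbn [qpoly_add qpoly_eval]; try ring.
  rewrite IH, Q2R_Qred, Q2R_plus; ring.
Qed.

Lemma qpoly_eval_scale c P x : qpoly_eval (qpoly_scale c P) x = Q2R c * qpoly_eval P x.
Proof.
  induction P as [|c' P IH]; cbn [qpoly_scale map qpoly_eval]; [ring|].
  fold (qpoly_scale c P). rewrite IH, Q2R_Qred, Q2R_mult; ring.
Qed.

Lemma qpoly_eval_mul P P' x : qpoly_eval (qpoly_mul P P') x = qpoly_eval P x * qpoly_eval P' x.
Proof.
  destruct P' as [|c' P']; [simpl; ring|]. unfold qpoly_mul.
  induction P as [|c P IH]; cbn [qpoly_mul_aux qpoly_eval]; [ring|].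
  rewrite qpoly_eval_add, qpoly_eval_scale. cbn [qpoly_eval]. rewrite IH, RMicromega.Q2R_0. cbn [qpoly_eval]; ring.
Qed.

Lemma qpoly_eval_comp P L x : qpoly_eval (qpoly_comp P L) x = qpoly_eval P (qpoly_eval L x).
Proof.
  induction P as [|c P IH]; cbn [qpoly_comp qpoly_eval]; [reflexivity|].
  rewrite qpoly_eval_add, qpoly_eval_mul, IH. cbn [qpoly_eval]. ring.
Qed.

Definition qnat (k : nat) : Q := inject_Z (Z.of_nat k).

Lemma Q2R_inject_Z z : Q2R (inject_Z z) = IZR z.
Proof. unfold Q2R; simpl; field. Qed.

Lemma Q2R_qnat k : Q2R (qnat k) = INR k.
Proof. unfold qnat. rewrite Q2R_inject_Z, INR_IZR_INZ. reflexivity. Qed.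

Lemma Q2R_inv_qnat_S k : Q2R (/ qnat (S k)) = / INR (S k).
Proof.
  rewrite Q2R_inv, Q2R_qnat; [reflexivity|]. unfold qnat, Qeq; simpl. lia.
Qed.

Definition qlin_up (j : Z) (q : nat) : list Q :=
  [(- inject_Z j / qnat (S q))%Q; (/ qnat (S q))%Q].

Definition qlin_down (j : Z) (q : nat) : list Q :=
  [(inject_Z (j + Z.of_nat (S q) + 1) / qnat (S q))%Q; (- / qnat (S q))%Q].

Lemma qpoly_eval_lin_up j q x : qpoly_eval (qlin_up j q) x = (x - IZR j) / INR (S q).
Proof.
  unfold qlin_up, Qdiv; cbn [qpoly_eval].
  rewrite Q2R_mult, Q2R_opp, Q2R_inject_Z, Q2R_inv_qnat_S. field.
  apply not_0_INR. lia.
Qed.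

Lemma qpoly_eval_lin_down j q x :
  qpoly_eval (qlin_down j q) x = (IZR (j + Z.of_nat (S q) + 1) - x) / INR (S q).
Proof.
  unfold qlin_down, Qdiv; cbn [qpoly_eval].
  rewrite Q2R_mult, Q2R_opp, Q2R_inject_Z, Q2R_inv_qnat_S. field.
  apply not_0_INR. lia.
Qed.

Fixpoint qbspline (p : nat) (j m : Z) : list Q :=
  match p with
  | O => if Z.eqb j m then [1%Q] else []
  | S q => qpoly_add (qpoly_mul (qlin_up j q) (qbspline q j m))
                     (qpoly_mul (qlin_down j q) (qbspline q (j + 1) m))
  end.

Fixpoint qdbspline (p : nat) (j m : Z) : list Q :=
  match p with
  | O => []
  | S q => qpoly_add
             (qpoly_add (qpoly_scale (/ qnat (S q)) (qbspline q j m))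
                        (qpoly_mul (qlin_up j q) (qdbspline q j m)))
             (qpoly_add (qpoly_scale (- / qnat (S q)) (qbspline q (j + 1) m))
                        (qpoly_mul (qlin_down j q) (qdbspline q (j + 1) m)))
  end.

Lemma bpiece_qbspline p j m x : bpiece p j m x = qpoly_eval (qbspline p j m) x.
Proof.
  revert j; induction p as [|q IH]; intro j; cbn [bpiece qbspline].
  - destruct (Z.eqb j m); simpl; [rewrite RMicromega.Q2R_1|]; ring.
  - rewrite qpoly_eval_add, !qpoly_eval_mul, <- !IH, qpoly_eval_lin_up, qpoly_eval_lin_down.
    reflexivity.
Qed.

Lemma dbpiece_qdbspline p j m x : dbpiece p j m x = qpoly_eval (qdbspline p j m) x.
Proof.
  revert j; induction p as [|q IH]; intro j; cbn [dbpiece qdbspline]; [reflexivity|].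
  rewrite !qpoly_eval_add, !qpoly_eval_mul, !qpoly_eval_scale, <- !IH, <- !bpiece_qbspline.
  rewrite qpoly_eval_lin_up, qpoly_eval_lin_down, Q2R_opp, Q2R_inv_qnat_S. unfold Rdiv. ring.
Qed.

Definition rule_sum (r : list (R * R)) (g : R * R -> R) : R :=
  fold_right (fun nw acc => g nw + acc) 0 r.

Definition rule_moment (r : list (R * R)) (i : nat) : R :=
  rule_sum r (fun nw => snd nw / 2 * fst nw ^ i).

(* Moments of the uniform probability on [-1, 1]; [rule_moment] halves the
   weights accordingly. *)
Definition qmoment_exact (i : nat) : Q :=
  if Nat.even i then (1 # Pos.of_succ_nat i)%Q else 0%Q.

(* The (p+1)-point Lobatto rule is exact up to degree 2p-1; its 2p-th moment is this. *)
Definition lobatto_top_moment (p : nat) : Q :=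
  match p with 1%nat => 1 | 2%nat => 1 # 3 | 3%nat => 13 # 75 | _ => 29 # 245 end.

Definition qmoment_lobatto (p i : nat) : Q :=
  if Nat.eqb i (2 * p) then lobatto_top_moment p else qmoment_exact i.

Lemma pow_opp_add_pow x i :
  (- x) ^ i + x ^ i = if Nat.even i then 2 * (x * x) ^ Nat.div2 i else 0.
Proof.
  replace (- x) with (-1 * x) by ring. rewrite Rpow_mult_distr.
  destruct (Nat.Even_or_Odd i) as [[k ->]|[k ->]].
  - rewrite Nat.even_mul, Nat.div2_double, !pow_mult.
    replace ((-1) ^ 2) with 1 by ring. rewrite pow1, <- Rsqr_pow2. simpl. unfold Rsqr. ring.
  - rewrite Nat.even_add, Nat.even_mul, !pow_add, !pow_mult.
    replace ((-1) ^ 2) with 1 by ring. rewrite pow1. simpl. ring.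
Qed.

Ltac moment_by_cases :=
  unfold qmoment_exact, qmoment_lobatto, lobatto_top_moment, Q2R; cbn -[pow IZR]; cbn [pow];
  rewrite ?Rmult_1_r, ?Rmult_0_l; lra.

Lemma gauss2_moment i : (i <= 2)%nat -> rule_moment (gauss 2) i = Q2R (qmoment_exact i).
Proof.
  intro Hi. unfold gauss, rule_moment, rule_sum. cbn [fold_right fst snd].
  assert (Ha : / sqrt 3 * / sqrt 3 = 1 / 3) by (rewrite <- Rinv_mult, sqrt_sqrt; lra).
  transitivity (1 / 2 * ((- / sqrt 3) ^ i + (/ sqrt 3) ^ i)); [ring|].
  rewrite pow_opp_add_pow, Ha.
  do 3 (destruct i as [|i]; [moment_by_cases|]). lia.
Qed.

Lemma gauss3_moment i : (i <= 4)%nat -> rule_moment (gauss 3) i = Q2R (qmoment_exact i).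
Proof.
  intro Hi. unfold gauss, rule_moment, rule_sum. cbn [fold_right fst snd].
  assert (Ha : sqrt (3 / 5) * sqrt (3 / 5) = 3 / 5) by (apply sqrt_sqrt; lra).
  transitivity (5 / 9 / 2 * ((- sqrt (3 / 5)) ^ i + (sqrt (3 / 5)) ^ i) + 8 / 9 / 2 * 0 ^ i); [ring|].
  rewrite pow_opp_add_pow, Ha.
  do 5 (destruct i as [|i]; [moment_by_cases|]). lia.
Qed.

Lemma gauss4_moment i : (i <= 6)%nat -> rule_moment (gauss 4) i = Q2R (qmoment_exact i).
Proof.
  intro Hi. unfold gauss, rule_moment, rule_sum. cbn [fold_right fst snd].
  assert (Hs : sqrt (6 / 5) * sqrt (6 / 5) = 6 / 5) by (apply sqrt_sqrt; lra).
  assert (Hs0 : 0 <= sqrt (6 / 5)) by apply sqrt_pos.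
  assert (Hs1 : sqrt (6 / 5) <= 3 / 2).
  { apply Rsqr_incr_0_var; [unfold Rsqr; rewrite Hs|]; lra. }
  assert (H30 : sqrt 30 = 5 * sqrt (6 / 5)).
  { replace 30 with (5 * 5 * (6 / 5)) by field.
    rewrite sqrt_mult, sqrt_square by lra. reflexivity. }
  assert (Ha : sqrt (3 / 7 - 2 / 7 * sqrt (6 / 5)) * sqrt (3 / 7 - 2 / 7 * sqrt (6 / 5))
               = 3 / 7 - 2 / 7 * sqrt (6 / 5)) by (apply sqrt_sqrt; lra).
  assert (Hb : sqrt (3 / 7 + 2 / 7 * sqrt (6 / 5)) * sqrt (3 / 7 + 2 / 7 * sqrt (6 / 5))
               = 3 / 7 + 2 / 7 * sqrt (6 / 5)) by (apply sqrt_sqrt; lra).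
  rewrite H30.
  set (a := sqrt (3 / 7 - 2 / 7 * sqrt (6 / 5))) in *.
  set (b := sqrt (3 / 7 + 2 / 7 * sqrt (6 / 5))) in *.
  set (s := sqrt (6 / 5)) in *. clearbody a b s.
  transitivity ((18 - 5 * s) / 36 / 2 * ((- b) ^ i + b ^ i)
                + (18 + 5 * s) / 36 / 2 * ((- a) ^ i + a ^ i)); [ring|].
  rewrite !pow_opp_add_pow, Ha, Hb.
  assert (s ^ 2 = 6 / 5) by (simpl; lra).
  assert (s ^ 3 = 6 / 5 * s) by (simpl; nra).
  assert (s ^ 4 = 36 / 25) by (simpl; nra).
  assert (s ^ 5 = 36 / 25 * s) by (simpl; nra).
  do 7 (destruct i as [|i]; [moment_by_cases|]). lia.
Qed.

Lemma gauss5_moment i : (i <= 8)%nat -> rule_moment (gauss 5) i = Q2R (qmoment_exact i).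
Proof.
  intro Hi. unfold gauss, rule_moment, rule_sum. cbn [fold_right fst snd].
  assert (Hs : sqrt (10 / 7) * sqrt (10 / 7) = 10 / 7) by (apply sqrt_sqrt; lra).
  assert (Hs0 : 0 <= sqrt (10 / 7)) by apply sqrt_pos.
  assert (Hs1 : sqrt (10 / 7) <= 5 / 2).
  { apply Rsqr_incr_0_var; [unfold Rsqr; rewrite Hs|]; lra. }
  assert (H70 : sqrt 70 = 7 * sqrt (10 / 7)).
  { replace 70 with (7 * 7 * (10 / 7)) by field.
    rewrite sqrt_mult, sqrt_square by lra. reflexivity. }
  assert (Ha : / 3 * sqrt (5 - 2 * sqrt (10 / 7)) * (/ 3 * sqrt (5 - 2 * sqrt (10 / 7)))
               = (5 - 2 * sqrt (10 / 7)) / 9).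
  { transitivity (/ 9 * (sqrt (5 - 2 * sqrt (10 / 7)) * sqrt (5 - 2 * sqrt (10 / 7)))); [field|].
    rewrite sqrt_sqrt by lra. field. }
  assert (Hb : / 3 * sqrt (5 + 2 * sqrt (10 / 7)) * (/ 3 * sqrt (5 + 2 * sqrt (10 / 7)))
               = (5 + 2 * sqrt (10 / 7)) / 9).
  { transitivity (/ 9 * (sqrt (5 + 2 * sqrt (10 / 7)) * sqrt (5 + 2 * sqrt (10 / 7)))); [field|].
    rewrite sqrt_sqrt by lra. field. }
  rewrite H70.
  set (a := / 3 * sqrt (5 - 2 * sqrt (10 / 7))) in *.
  set (b := / 3 * sqrt (5 + 2 * sqrt (10 / 7))) in *.
  set (s := sqrt (10 / 7)) in *. clearbody a b s.
  transitivity ((322 - 13 * (7 * s)) / 900 / 2 * ((- b) ^ i + b ^ i)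
                + (322 + 13 * (7 * s)) / 900 / 2 * ((- a) ^ i + a ^ i)
                + 128 / 225 / 2 * 0 ^ i); [ring|].
  rewrite !pow_opp_add_pow, Ha, Hb.
  assert (s ^ 2 = 10 / 7) by (simpl; lra).
  assert (s ^ 3 = 10 / 7 * s) by (simpl; nra).
  assert (s ^ 4 = 100 / 49) by (simpl; nra).
  assert (s ^ 5 = 100 / 49 * s) by (simpl; nra).
  do 9 (destruct i as [|i]; [moment_by_cases|]). lia.
Qed.

Lemma lobatto2_moment i : (i <= 2)%nat -> rule_moment (lobatto 2) i = Q2R (qmoment_lobatto 1 i).
Proof.
  intro Hi. unfold lobatto, rule_moment, rule_sum. cbn [fold_right fst snd].
  replace (IZR (Zneg 1)) with (Ropp 1) by ring.
  transitivity (1 / 2 * ((Ropp 1) ^ i + 1 ^ i)); [ring|].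
  rewrite pow_opp_add_pow.
  do 3 (destruct i as [|i]; [moment_by_cases|]). lia.
Qed.

Lemma lobatto3_moment i : (i <= 4)%nat -> rule_moment (lobatto 3) i = Q2R (qmoment_lobatto 2 i).
Proof.
  intro Hi. unfold lobatto, rule_moment, rule_sum. cbn [fold_right fst snd].
  replace (IZR (Zneg 1)) with (Ropp 1) by ring.
  transitivity (1 / 3 / 2 * ((Ropp 1) ^ i + 1 ^ i) + 4 / 3 / 2 * 0 ^ i); [ring|].
  rewrite pow_opp_add_pow.
  do 5 (destruct i as [|i]; [moment_by_cases|]). lia.
Qed.

Lemma lobatto4_moment i : (i <= 6)%nat -> rule_moment (lobatto 4) i = Q2R (qmoment_lobatto 3 i).
Proof.
  intro Hi. unfold lobatto, rule_moment, rule_sum. cbn [fold_right fst snd].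
  replace (IZR (Zneg 1)) with (Ropp 1) by ring.
  assert (Ha : / sqrt 5 * / sqrt 5 = 1 / 5) by (rewrite <- Rinv_mult, sqrt_sqrt; lra).
  transitivity (1 / 6 / 2 * ((Ropp 1) ^ i + 1 ^ i)
                + 5 / 6 / 2 * ((- / sqrt 5) ^ i + (/ sqrt 5) ^ i)); [ring|].
  rewrite !pow_opp_add_pow, Ha.
  do 7 (destruct i as [|i]; [moment_by_cases|]). lia.
Qed.

Lemma lobatto5_moment i : (i <= 8)%nat -> rule_moment (lobatto 5) i = Q2R (qmoment_lobatto 4 i).
Proof.
  intro Hi. unfold lobatto, rule_moment, rule_sum. cbn [fold_right fst snd].
  replace (IZR (Zneg 1)) with (Ropp 1) by ring.
  assert (Ha : sqrt (3 / 7) * sqrt (3 / 7) = 3 / 7) by (apply sqrt_sqrt; lra).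
  transitivity (1 / 10 / 2 * ((Ropp 1) ^ i + 1 ^ i)
                + 49 / 90 / 2 * ((- sqrt (3 / 7)) ^ i + (sqrt (3 / 7)) ^ i)
                + 32 / 45 / 2 * 0 ^ i); [ring|].
  rewrite !pow_opp_add_pow, Ha.
  do 9 (destruct i as [|i]; [moment_by_cases|]). lia.
Qed.

Lemma gauss_moment p i : (1 <= p <= 4)%nat -> (i <= 2 * p)%nat ->
  rule_moment (gauss (S p)) i = Q2R (qmoment_exact i).
Proof.
  intros Hp Hi. destruct p as [|[|[|[|[|p]]]]]; try lia;
  [apply gauss2_moment | apply gauss3_moment | apply gauss4_moment | apply gauss5_moment]; lia.
Qed.

Lemma lobatto_moment p i : (1 <= p <= 4)%nat -> (i <= 2 * p)%nat ->
  rule_moment (lobatto (S p)) i = Q2R (qmoment_lobatto p i).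
Proof.
  intros Hp Hi. destruct p as [|[|[|[|[|p]]]]]; try lia;
  [apply lobatto2_moment | apply lobatto3_moment | apply lobatto4_moment | apply lobatto5_moment];
  lia.
Qed.

Fixpoint moment_dot (r : list (R * R)) (P : list Q) (s : nat) : R :=
  match P with [] => 0 | c :: P' => Q2R c * rule_moment r s + moment_dot r P' (S s) end.

Fixpoint qmoment_dot (mu : nat -> Q) (P : list Q) (s : nat) : Q :=
  match P with [] => 0%Q | c :: P' => Qred (c * mu s + qmoment_dot mu P' (S s)) end.

Definition qelem_map (m : Z) : list Q := [(inject_Z m + (1 # 2))%Q; (1 # 2)%Q].

Lemma qpoly_eval_elem_map m t : qpoly_eval (qelem_map m) t = IZR m + (1 + t) / 2.
Proof.
  unfold qelem_map. cbn [qpoly_eval]. rewrite Q2R_plus, Q2R_inject_Z. unfold Q2R; simpl. field.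
Qed.

Lemma rule_sum_ext r g g' : (forall nw, g nw = g' nw) -> rule_sum r g = rule_sum r g'.
Proof. intro H. induction r as [|nw r IH]; simpl; [reflexivity|]. now rewrite H, IH. Qed.

Lemma rule_sum_plus r g g' :
  rule_sum r (fun nw => g nw + g' nw) = rule_sum r g + rule_sum r g'.
Proof. induction r as [|nw r IH]; simpl; [ring|]. rewrite IH. ring. Qed.

Lemma rule_sum_scal r c g : rule_sum r (fun nw => c * g nw) = c * rule_sum r g.
Proof. induction r as [|nw r IH]; simpl; [ring|]. rewrite IH. ring. Qed.

Lemma rule_sum_qpoly r P s :
  rule_sum r (fun nw => snd nw / 2 * (qpoly_eval P (fst nw) * fst nw ^ s)) = moment_dot r P s.
Proof.
  revert s; induction P as [|c P IH]; intro s; cbn [qpoly_eval moment_dot].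
  - rewrite (rule_sum_ext _ _ (fun nw => 0 * snd nw)) by (intros; ring).
    rewrite rule_sum_scal. ring.
  - rewrite (rule_sum_ext _ _ (fun nw => Q2R c * (snd nw / 2 * fst nw ^ s)
                + snd nw / 2 * (qpoly_eval P (fst nw) * fst nw ^ S s))) by (intros; simpl; ring).
    rewrite rule_sum_plus, rule_sum_scal, IH. reflexivity.
Qed.

Lemma apply_rule_qpoly r m P :
  apply_rule r m (qpoly_eval P) = moment_dot r (qpoly_comp P (qelem_map m)) 0.
Proof.
  rewrite <- rule_sum_qpoly.
  change (apply_rule r m (qpoly_eval P))
    with (rule_sum r (fun nw => snd nw / 2 * qpoly_eval P (IZR m + (1 + fst nw) / 2))).
  apply rule_sum_ext. intro nw. rewrite qpoly_eval_comp, qpoly_eval_elem_map. simpl. ring.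
Qed.

Lemma moment_dot_Q r mu P s :
  (forall i, (i < s + length P)%nat -> rule_moment r i = Q2R (mu i)) ->
  moment_dot r P s = Q2R (qmoment_dot mu P s).
Proof.
  revert s; induction P as [|c P IH]; intros s H; cbn [moment_dot qmoment_dot length].
  - now rewrite RMicromega.Q2R_0.
  - rewrite Q2R_Qred, Q2R_plus, Q2R_mult, H, IH by (simpl; lia || (intros; apply H; simpl; lia)).
    reflexivity.
Qed.

Definition qtau (p : nat) : Q :=
  match p with 1%nat => 1 # 2 | 2%nat => 1 # 3 | 3%nat => -3 # 2 | _ => -79 # 5 end.

Definition qblended (p : nat) (m : Z) (P : list Q) : Q :=
  let P' := qpoly_comp P (qelem_map m) in
  (qtau p * qmoment_dot qmoment_exact P' 0 + (1 - qtau p) * qmoment_dot (qmoment_lobatto p) P' 0)%Q.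

Lemma blended_qpoly p m P : (1 <= p <= 4)%nat ->
  (length (qpoly_comp P (qelem_map m)) <= 2 * p + 1)%nat ->
  blended p m (qpoly_eval P) = Q2R (qblended p m P).
Proof.
  intros Hp Hl. unfold blended, qblended. rewrite !apply_rule_qpoly.
  rewrite Q2R_plus, !Q2R_mult, Q2R_minus, RMicromega.Q2R_1.
  rewrite (moment_dot_Q _ qmoment_exact), (moment_dot_Q _ (qmoment_lobatto p)).
  - replace (tau p) with (Q2R (qtau p)); [reflexivity|].
    destruct p as [|[|[|[|[|p]]]]]; try lia; unfold tau, qtau, Q2R; simpl; field.
  - intros i Hi. apply lobatto_moment; lia.
  - intros i Hi. apply gauss_moment; lia.
Qed.

Lemma apply_rule_ext r m f g : (forall x, f x = g x) -> apply_rule r m f = apply_rule r m g.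
Proof. intro H. unfold apply_rule. induction r as [|nw r IH]; simpl; [reflexivity|]. now rewrite H, IH. Qed.

Lemma blended_ext p m f g : (forall x, f x = g x) -> blended p m f = blended p m g.
Proof. intro H. unfold blended. now rewrite !(apply_rule_ext _ _ f g H). Qed.

Fixpoint qsum (f : nat -> Q) (N : nat) : Q :=
  match N with O => 0%Q | S N' => Qred (qsum f N' + f N') end.

Lemma sumR_Q g f N : (forall i, (i < N)%nat -> g i = Q2R (f i)) -> sumR g N = Q2R (qsum f N).
Proof.
  induction N as [|N IH]; intro H; cbn [sumR qsum].
  - now rewrite RMicromega.Q2R_0.
  - rewrite Q2R_Qred, Q2R_plus, IH, H; [reflexivity | lia | intros; apply H; lia].
Qed.

Definition elem (p i : nat) : Z := (Z.of_nat i - Z.of_nat p)%Z.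

Definition qsum_elems (p : nat) (F : Z -> list Q) : Q :=
  qsum (fun i => qblended p (elem p i) (F (elem p i))) (3 * p + 1).

Definition degrees_ok (p : nat) (F : Z -> list Q) : bool :=
  forallb (fun i => Nat.leb (length (qpoly_comp (F (elem p i)) (qelem_map (elem p i)))) (2 * p + 1))
    (seq 0 (3 * p + 1)).

Lemma sum_elems_blended_Q p (f : Z -> R -> R) (F : Z -> list Q) :
  (1 <= p <= 4)%nat -> degrees_ok p F = true ->
  (forall m x, f m x = qpoly_eval (F m) x) ->
  sum_elems p (fun m => blended p m (f m)) = Q2R (qsum_elems p F).
Proof.
  intros Hp Hdeg Hf. unfold sum_elems, qsum_elems. apply sumR_Q. intros i Hi.
  unfold degrees_ok in Hdeg. rewrite forallb_forall in Hdeg.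
  specialize (Hdeg i (proj2 (in_seq _ _ _) (conj (Nat.le_0_l _) Hi))).
  apply Nat.leb_le in Hdeg. fold (elem p i).
  rewrite <- blended_qpoly by assumption. apply blended_ext, Hf.
Qed.

Definition qstiffness (p : nat) (k : Z) (m : Z) : list Q :=
  qpoly_mul (qdbspline p k m) (qdbspline p 0 m).

Definition qmass (p : nat) (k : Z) (m : Z) : list Q :=
  qpoly_mul (qbspline p k m) (qbspline p 0 m).

Lemma Acoef_Q p k : (1 <= p <= 4)%nat -> degrees_ok p (qstiffness p k) = true ->
  Acoef p k = Q2R (qsum_elems p (qstiffness p k)).
Proof.
  intros Hp Hdeg. apply sum_elems_blended_Q; [assumption..|]. intros m x.
  unfold qstiffness. now rewrite qpoly_eval_mul, !dbpiece_qdbspline.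
Qed.

Lemma Bcoef_Q p k : (1 <= p <= 4)%nat -> degrees_ok p (qmass p k) = true ->
  Bcoef p k = Q2R (qsum_elems p (qmass p k)).
Proof.
  intros Hp Hdeg. apply sum_elems_blended_Q; [assumption..|]. intros m x.
  unfold qmass. now rewrite qpoly_eval_mul, !bpiece_qbspline.
Qed.

Fixpoint qpow (q : Q) (n : nat) : Q := match n with O => 1%Q | S n' => (q * qpow q n')%Q end.

Lemma Q2R_qpow q n : Q2R (qpow q n) = Q2R q ^ n.
Proof. induction n; simpl; [apply RMicromega.Q2R_1|]. rewrite Q2R_mult, IHn. reflexivity. Qed.

(* Factorials are computed in [Z]: unary [fact] would be far too slow. *)
Fixpoint Zfact (n : nat) : Z := match n with O => 1%Z | S n' => (Z.of_nat (S n') * Zfact n')%Z end.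

Lemma INR_fact_Zfact n : INR (fact n) = IZR (Zfact n).
Proof.
  induction n; [reflexivity|]. change (fact (S n)) with (S n * fact n)%nat.
  cbn [Zfact]. rewrite mult_INR, mult_IZR, IHn, INR_IZR_INZ. reflexivity.
Qed.

Lemma Q2R_inv_Zfact n : Q2R (/ inject_Z (Zfact n)) = / INR (fact n).
Proof.
  rewrite Q2R_inv, Q2R_inject_Z, INR_fact_Zfact; [reflexivity|].
  intro H. apply Qeq_eqR in H.
  rewrite Q2R_inject_Z, <- INR_fact_Zfact, RMicromega.Q2R_0 in H. exact (INR_fact_neq_0 n H).
Qed.

Definition qtaylor_coef (c : nat -> Q) (p m : nat) : Q :=
  Qred ((if Nat.eqb m 0 then c O else 0)
        + qpow (-1) m * / inject_Z (Zfact (2 * m))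
          * (2 * qsum (fun i => c (S i) * qpow (qnat (S i)) (2 * m)) p))%Q.

Lemma cos_poly_taylor_coef_Q (c : nat -> R) (cq : nat -> Q) p m :
  (forall k, (k <= p)%nat -> c k = Q2R (cq k)) ->
  cos_poly_taylor_coef c p m = Q2R (qtaylor_coef cq p m).
Proof.
  intro H. unfold cos_poly_taylor_coef, qtaylor_coef.
  rewrite Q2R_Qred, Q2R_plus, !Q2R_mult, Q2R_qpow, Q2R_inv_Zfact.
  rewrite (sumR_Q _ (fun i => cq (S i) * qpow (qnat (S i)) (2 * m))%Q).
  - replace (Q2R (-1)) with (-1) by (unfold Q2R; simpl; field).
    replace (Q2R 2) with 2 by (unfold Q2R; simpl; field). f_equal.
    destruct (Nat.eqb m 0); [apply H; lia | symmetry; apply RMicromega.Q2R_0].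
  - intros i Hi. rewrite Q2R_mult, Q2R_qpow, Q2R_qnat, H by lia. ring.
Qed.

Definition qstiff_coef (p k : nat) : Q := qsum_elems p (qstiffness p (Z.of_nat k)).
Definition qmass_coef (p k : nat) : Q := qsum_elems p (qmass p (Z.of_nat k)).

Definition qcoef_shift (b : nat -> Q) (m : nat) : Q := match m with O => 0%Q | S m' => b m' end.

(* The [degrees_ok] conjuncts justify evaluating the quadrature through the
   moments of degree at most 2p. *)
Definition symbol_identities_check (p : nat) : bool :=
  forallb (fun k => degrees_ok p (qstiffness p (Z.of_nat k)) && degrees_ok p (qmass p (Z.of_nat k)))
    (seq 0 (S p))
  && forallb (fun m => Qeq_bool (qtaylor_coef (qstiff_coef p) p m)
                                (qcoef_shift (qtaylor_coef (qmass_coef p) p) m))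
       (seq 0 (p + 2))
  && Qeq_bool (qtaylor_coef (qmass_coef p) p 0) 1.

Lemma symbol_identities_check_ok p : (1 <= p <= 4)%nat -> symbol_identities_check p = true.
Proof. intro Hp. destruct p as [|[|[|[|[|p]]]]]; try lia; vm_compute; reflexivity. Qed.

Lemma symbol_taylor_identities p : (1 <= p <= 4)%nat ->
  let alpha := fun k => Acoef p (Z.of_nat k) in
  let beta := fun k => Bcoef p (Z.of_nat k) in
  (forall m, (m < p + 2)%nat ->
     cos_poly_taylor_coef alpha p m = coef_shift (cos_poly_taylor_coef beta p) m)
  /\ cos_poly_taylor_coef beta p 0 = 1.
Proof.
  intros Hp alpha beta.
  pose proof (symbol_identities_check_ok p Hp) as Hc. unfold symbol_identities_check in Hc.
  apply andb_prop in Hc as [Hc Hnorm]. apply andb_prop in Hc as [Hdeg Hmatch].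
  rewrite forallb_forall in Hdeg, Hmatch.
  assert (Hdeg' : forall k, (k <= p)%nat ->
            degrees_ok p (qstiffness p (Z.of_nat k)) = true
            /\ degrees_ok p (qmass p (Z.of_nat k)) = true).
  { intros k Hk. apply andb_prop, Hdeg, in_seq. lia. }
  assert (Ha : forall k, (k <= p)%nat -> alpha k = Q2R (qstiff_coef p k))
    by (intros k Hk; apply Acoef_Q, Hdeg'; assumption).
  assert (Hb : forall k, (k <= p)%nat -> beta k = Q2R (qmass_coef p k))
    by (intros k Hk; apply Bcoef_Q, Hdeg'; assumption).
  split.
  - intros m Hm. specialize (Hmatch m ltac:(apply in_seq; lia)).
    apply RMicromega.Qeq_true in Hmatch.
    rewrite (cos_poly_taylor_coef_Q alpha (qstiff_coef p)), Hmatch by assumption.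
    destruct m; simpl; [apply RMicromega.Q2R_0|].
    symmetry. apply cos_poly_taylor_coef_Q. assumption.
  - apply RMicromega.Qeq_true in Hnorm. rewrite RMicromega.Q2R_1 in Hnorm.
    rewrite (cos_poly_taylor_coef_Q beta (qmass_coef p)) by assumption. exact Hnorm.
Qed.

Theorem mainTheorem2 (n : nat) (a : nat -> R) (p : nat) (omega : R) :
  (1 <= n)%nat -> (1 <= p <= 4)%nat -> 0 < omega ->
  exists K delta : R, 0 < delta /\
    forall h lam : R, 0 < h < delta ->
      sumR (fun i => a (S i) * omega ^ (2 * i)) n * calA p (omega * h)
        = (lam - a O) * calB p (omega * h) * h ^ 2 ->
      Rabs (lam - sumR (fun k => a k * omega ^ (2 * k)) (S n)
              - Cconst p * sumR (fun i => a (S i) * omega ^ (2 * S i)) n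
                * (omega * h) ^ (2 * p + 2))
        <= K * h ^ (2 * p + 4).
Proof.
  intros _ Hp Hom.
  destruct (symbol_taylor_identities p Hp) as [Hmatch Hnorm].
  set (alpha := fun k => Acoef p (Z.of_nat k)) in *.
  set (beta := fun k => Bcoef p (Z.of_nat k)) in *.
  destruct (symbol_residual_bound alpha beta p (Cconst p) Hmatch (Cconst_taylor_coef p) Hnorm)
    as [K2 HK2].
  apply (eigenvalue_error_bound n a p omega (cos_poly alpha p) (cos_poly beta p) (Cconst p)
           (cos_poly_remainder_const beta p 1) K2 Hom).
  - apply cos_poly_remainder_const_nonneg.
  - intros L HL HSpL. apply (cos_poly_sub_1_bound beta p Hnorm L HL).
    apply (INR_S_mul_le_1 p L HL HSpL).
  - exact HK2.
Qed.
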